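(* Let $G=G_+G_-$ be a unique factorization of a finite group $G$, and let $R\in H(G;G_+,G_-)\otimes H(G;G_+,G_-)$ be invertible and positive, with $R^{-1}$ also positive. Then there exist a subset $\mathcal R\subset G\times G$ and a function $r:\mathcal R\to\mathbb R_{>0}$ such that (1) the restriction of the map $G\times G\to G_+\times G_+$, $(g,h)\mapsto(g_+,h_+)$, to $\mathcal R$ is a bijection onto $G_+\times G_+$; and (2) $R=\sum_{(g,h)\in\mathcal R} r(g,h)\,\{g\}\otimes\{h\}$.
   Context: A unique factorization $G=G_+G_-$ consists of subgroups $G_+,G_-$ such that every $g\in G$ is uniquely $g=g_+g_-$ with $g_+\in G_+$, $g_-\in G_-$. For $u\in G_+$, $x\in G_-$ define ${}^u x\in G_-$, $u^x\in G_+$, ${}^x u\in G_+$, $x^u\in G_-$ by $ux=({}^u x)(u^x)$ and $xu=({}^x u)(x^u)$. $H(G;G_+,G_-)$ is the complex vector space with basis $\{g\}$, $g\in G$, and Hopf algebra structure: $\{g\}\{h\}=\delta_{g_+^{\,g_-},\,h_+}\{g h_-\}$; unit $1=\sum_{u\in G_+}\{u\}$; $\Delta\{g\}=\sum_{h\in G_+}\{g_+h^{-1}({}^{h}g_-)\}\otimes\{h g_-\}$; $\varepsilon\{g\}=\delta_{g_+,e}$; $S\{g\}=\{g^{-1}\}$. An element of $H(G;G_+,G_-)\otimes H(G;G_+,G_-)$ is positive if it is a linear combination of the $\{g\}\otimes\{h\}$ with non-negative real coefficients. *)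

From HB Require Import structures.
From mathcomp Require Import all_boot all_order all_algebra all_fingroup.
From mathcomp Require Import reals complex.
Set Implicit Arguments. Unset Strict Implicit. Unset Printing Implicit Defensive.
Import GRing.Theory Num.Theory.
Local Open Scope ring_scope.

Section HopfDefs.
Variables (gT : finGroupType).

(* G = [set: gT]; G = G+ G- is a unique factorization. *)
Definition unique_factorization (Gp Gm : {group gT}) : Prop :=
  forall g : gT, exists! ab : gT * gT,
    [/\ ab.1 \in Gp, ab.2 \in Gm & g = (ab.1 * ab.2)%g].

Definition fact1 (A B : {set gT}) (g : gT) : gT :=
  odflt 1%g [pick a in A | (a^-1 * g)%g \in B].
Definition fact2 (A B : {set gT}) (g : gT) : gT := ((fact1 A B g)^-1 * g)%g.

Variables (Gp Gm : {group gT}).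

Definition gplus (g : gT) : gT := fact1 Gp Gm g.
Definition gminus (g : gT) : gT := fact2 Gp Gm g.

(* For u \in G+, x \in G- : u x = (^u x)(u^x), ^u x \in G-, u^x \in G+. *)
Definition ract (u x : gT) : gT := fact2 Gm Gp (u * x)%g.

Variable C : numDomainType.

(* Elements of H and of H (x) H, as coefficient functions on the basis. *)
Definition H := {ffun gT -> C}.
Definition H2 := {ffun gT * gT -> C}.

(* Structure constant: {g}{h} = [g_+^{g_-} = h_+] {g h_-}. *)
Definition mul_coef (g h k : gT) : C :=
  ((ract (gplus g) (gminus g) == gplus h) && (k == g * gminus h)%g)%:R.

Definition mul2 (A B : H2) : H2 :=
  [ffun k : gT * gT => \sum_(g : gT * gT) \sum_(h : gT * gT)
     A g * B h * mul_coef g.1 h.1 k.1 * mul_coef g.2 h.2 k.2].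

(* Unit 1 (x) 1, with 1 = \sum_{u \in G+} {u}. *)
Definition one2 : H2 := [ffun k : gT * gT => ((k.1 \in Gp) && (k.2 \in Gp))%:R].

Definition invertible2 (A B : H2) : Prop := mul2 A B = one2 /\ mul2 B A = one2.

Definition positive2 (A : H2) : Prop := forall k, 0 <= A k.

Definition basis2 (p : gT * gT) : H2 := [ffun k => (k == p)%:R].

End HopfDefs.

(* Positivity rules out cancellation: a coefficient of a product of two
   positive elements of H (x) H is nonzero iff some pair of basis vectors
   from the two supports contributes to it.  By the multiplication rule, if
   {g}{h} = {k} with k in G+, then g_+ = k and h = x k with x in G-.
   For (u1, u2) in G+ x G+, the coefficient of {u1} (x) {u2} in R R^-1 = 1 is
   nonzero, which yields a point of the support of R over (u1, u2) together
   with a point (h1, h2) of the support of R^-1.  Conversely, for every point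
   (g1, g2) of the support of R over (u1, u2), the term {h1}{g1} (x) {h2}{g2}
   of R^-1 R = 1 is nonzero, so h_i (g_i)_- lies in G+ and
   (g_i)_- = ((h_i)_-)^-1: the support of R meets each fibre over G+ x G+ in
   exactly one point, and r is the coefficient of R there. *)

From Pilot Require Import Defs.
From HB Require Import structures.
From mathcomp Require Import all_boot all_order all_algebra all_fingroup.
From mathcomp Require Import reals complex.
Import GRing.Theory Num.Theory.
Local Open Scope ring_scope.

Section Factorization.
Context {gT : finGroupType} {A B : {group gT}}.
Local Open Scope group_scope.

Lemma fact12 g : fact1 A B g * fact2 A B g = g.
Proof. by rewrite /fact2 mulKVg. Qed.

Hypotheses (mulAB : A * B = [set: gT]) (tiAB : A :&: B = 1).

Lemma fact_in g : fact1 A B g \in A /\ fact2 A B g \in B.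
Proof.
rewrite /fact2 /fact1; case: pickP => [a /andP[] //|no_a].
have /mulsgP[a b Aa Bb def_g] : g \in A * B by rewrite mulAB inE.
by have := no_a a; rewrite Aa def_g mulKg Bb.
Qed.

Lemma fact_mul {a b} : a \in A -> b \in B ->
  fact1 A B (a * b) = a /\ fact2 A B (a * b) = b.
Proof.
move=> Aa Bb; set a' := fact1 A B _; set b' := fact2 A B _.
have [Aa' Bb'] := fact_in (a * b).
have def_ab : a' * b' = a * b by exact: fact12.
have : a^-1 * a' \in A :&: B.
  have AB_a' : a^-1 * a' = b * b'^-1.
    by rewrite -(mulgK b' a') def_ab -mulgA mulKg.
  by rewrite inE {2}AB_a' !groupM ?groupV.
rewrite tiAB => /set1gP /eqP; rewrite -eq_mulVg1 => /eqP def_a'.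
by split=> //; rewrite /b' /fact2 -/a' -def_a' mulKg.
Qed.

End Factorization.

Section UniqueFactorization.
Context {gT : finGroupType} {Gp Gm : {group gT}}.
Hypothesis ufG : unique_factorization Gp Gm.
Local Open Scope group_scope.

Local Notation gp := (gplus Gp Gm).
Local Notation gm := (gminus Gp Gm).
(* The G+-factor of g in the opposite factorization G = G- G+; for
   g = g_+ g_- it is the g_+^(g_-) of the multiplication rule. *)
Local Notation rplus := (fact2 Gm Gp).

Lemma unique_factorization_mulT : Gp * Gm = [set: gT].
Proof.
apply/setP => g; rewrite inE; have [[a b] [[/= Ga Gb ->] _]] := ufG g.
exact: mem_mulg.
Qed.

Lemma unique_factorization_TI : Gp :&: Gm = 1.
Proof.
apply/trivgP/subsetP => x /setIP[Gx Mx]; apply/set1gP.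
have [ab [_ uniq_x]] := ufG x.
have ab_x1 := uniq_x (x, 1) (And3 Gx (group1 Gm) (esym (mulg1 x))).
have ab_1x := uniq_x (1, x) (And3 (group1 Gp) Mx (esym (mul1g x))).
by move: ab_1x; rewrite ab_x1 => -[].
Qed.

Lemma unique_factorization_mulT_opp : Gm * Gp = [set: gT].
Proof. by apply/setP => x; rewrite -invMG unique_factorization_mulT !inE. Qed.

Lemma gplus_mul_gminus g : gp g * gm g = g.
Proof. exact: fact12. Qed.

Lemma gplus_in g : gp g \in Gp.
Proof. by case: (fact_in unique_factorization_mulT g). Qed.

Lemma gminus_in g : gm g \in Gm.
Proof. by case: (fact_in unique_factorization_mulT g). Qed.

Lemma gplus_mul a b : a \in Gp -> b \in Gm -> gp (a * b) = a.
Proof.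
move=> Ga Mb.
by case: (fact_mul unique_factorization_mulT unique_factorization_TI Ga Mb).
Qed.

Lemma rplus_mul a b : a \in Gm -> b \in Gp -> rplus (a * b) = b.
Proof.
have tiMG : Gm :&: Gp = 1 by rewrite setIC unique_factorization_TI.
by move=> Ma Gb; case: (fact_mul unique_factorization_mulT_opp tiMG Ma Gb).
Qed.

Lemma gplus_gminus_inj x y : gp x = gp y -> gm x = gm y -> x = y.
Proof.
by move=> eq_p eq_m; rewrite -[x]gplus_mul_gminus -[y]gplus_mul_gminus eq_p eq_m.
Qed.

Lemma ract_gplus_gminus g : Defs.ract Gp Gm (gp g) (gm g) = rplus g.
Proof. by rewrite /Defs.ract gplus_mul_gminus. Qed.

Lemma gplus_rplus_mul_gminus g h : rplus g = gp h -> g * gm h \in Gp ->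
  gp g = g * gm h /\ rplus h = g * gm h.
Proof.
move=> rg_ph Gk; split.
  by rewrite -{1}[g](mulgK (gm h)) gplus_mul // groupV gminus_in.
have [a Ma def_g] : exists2 a, a \in Gm & g = a * rplus g.
  exists (fact1 Gm Gp g); last by rewrite fact12.
  by case: (fact_in unique_factorization_mulT_opp g).
set k := g * gm h; have -> : h = a^-1 * k.
  by rewrite /k def_g rg_ph -mulgA gplus_mul_gminus mulKg.
by rewrite rplus_mul ?groupV.
Qed.

Lemma gminus_inv_of_mul_Gp g h : h * gm g \in Gp -> gm g = (gm h)^-1.
Proof.
move=> Gk; apply/eqP; rewrite eq_sym eq_invg_mul; apply/eqP/set1gP.
rewrite -unique_factorization_TI inE [_ \in Gm]groupM ?gminus_in // andbT.
rewrite -(mulKg (gp h) (_ * _)) [gp h * _]mulgA gplus_mul_gminus.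
by rewrite groupM ?groupV ?gplus_in.
Qed.

End UniqueFactorization.

Lemma H2_support_expansion (R : realType) (gT : finGroupType) (A : H2 gT R[i]) :
  A = \sum_(p in [set p | A p != 0]) A p *: basis2 R[i] p.
Proof.
have scaleE (c x : R[i]) : c *: x = c * x by [].
apply/ffunP => k; rewrite sum_ffunE.
under eq_bigr => p _ do rewrite !ffunE scaleE.
have [Ak0|Ak] := eqVneq (A k) 0.
  rewrite Ak0 big1 // => p; rewrite inE => Ap.
  suff /negbTE-> : k != p by rewrite mulr0.
  by apply: contra_neq Ap => <-.
rewrite (bigD1 k) ?inE //= eqxx mulr1 big1 ?addr0 // => p /andP[_ /negbTE].
by rewrite eq_sym => ->; rewrite mulr0.
Qed.

Section PositiveInvertible.
Context {gT : finGroupType} {Gp Gm : {group gT}} {C : numDomainType}.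

Local Notation gp := (gplus Gp Gm).
Local Notation gm := (gminus Gp Gm).
Local Notation rplus := (fact2 Gm Gp).
Local Notation gplus2 := (fun p : gT * gT => (gp p.1, gp p.2)).
Local Notation rplus2 := (fun p : gT * gT => (rplus p.1, rplus p.2)).

Lemma mul_coef_neq0 g h k :
  (mul_coef Gp Gm C g h k != 0) = (rplus g == gp h) && (k == g * gm h)%g.
Proof. by rewrite /mul_coef ract_gplus_gminus pnatr_eq0 eqb0 negbK. Qed.

Lemma mul2_neq0P {A B : H2 gT C} {k} : positive2 A -> positive2 B ->
  reflect (exists g h, [/\ A g != 0, B h != 0,
             mul_coef Gp Gm C g.1 h.1 k.1 != 0 & mul_coef Gp Gm C g.2 h.2 k.2 != 0])
          (mul2 Gp Gm A B k != 0).
Proof.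
move=> A_ge0 B_ge0; rewrite ffunE pair_bigA /= psumr_neq0 => [|gh _]; last first.
  by rewrite !mulr_ge0 ?ler0n.
apply: (iffP hasP) => [[[g h] _ /=] | [g [h [Ag Bh c1 c2]]]].
  rewrite lt0r !mulf_eq0 !negb_or => /andP[/andP[/andP[/andP[Ag Bh] c1] c2] _].
  by exists g, h.
exists (g, h); first exact: mem_index_enum.
by rewrite lt0r !mulf_eq0 !negb_or Ag Bh c1 c2 !mulr_ge0 ?ler0n.
Qed.

Hypothesis ufG : unique_factorization Gp Gm.

Lemma mul_coef_neq0_Gp {g h u} : mul_coef Gp Gm C g h u != 0 -> u \in Gp ->
  gp g = u /\ rplus h = u.
Proof.
by rewrite mul_coef_neq0 => /andP[/eqP rg /eqP ->]; apply: gplus_rplus_mul_gminus.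
Qed.

Context {Rm Ri : H2 gT C}.
Hypotheses (Rm_ge0 : positive2 Rm) (Ri_ge0 : positive2 Ri).
Hypothesis RmRi : mul2 Gp Gm Rm Ri = one2 Gp C.
Hypothesis RiRm : mul2 Gp Gm Ri Rm = one2 Gp C.

Lemma support_gplus_rplus {u} : u \in setX Gp Gp ->
  exists p q, [/\ Rm p != 0, Ri q != 0, gplus2 p = u & rplus2 q = u].
Proof.
case: u => u1 u2; rewrite inE /= => /andP[Gu1 Gu2].
have : mul2 Gp Gm Rm Ri (u1, u2) != 0 by rewrite RmRi ffunE /= Gu1 Gu2 oner_eq0.
case/(mul2_neq0P Rm_ge0 Ri_ge0) => p [q [Rp Rq c1 c2]].
have [gp1 rq1] := mul_coef_neq0_Gp c1 Gu1; have [gp2 rq2] := mul_coef_neq0_Gp c2 Gu2.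
by exists p, q; rewrite /= gp1 gp2 rq1 rq2.
Qed.

Lemma support_gminus {p q} : Rm p != 0 -> Ri q != 0 -> rplus2 q = gplus2 p ->
  gm p.1 = (gm q.1)^-1%g /\ gm p.2 = (gm q.2)^-1%g.
Proof.
move=> Rp Rq [rq1 rq2]; set k := ((q.1 * gm p.1)%g, (q.2 * gm p.2)%g).
have : mul2 Gp Gm Ri Rm k != 0.
  apply/(mul2_neq0P Ri_ge0 Rm_ge0); exists q, p.
  by rewrite !mul_coef_neq0 rq1 rq2 !eqxx.
rewrite RiRm ffunE pnatr_eq0 eqb0 negbK.
by case/andP => /(gminus_inv_of_mul_Gp ufG) -> /(gminus_inv_of_mul_Gp ufG) ->.
Qed.

Lemma support_gplus2_inj : {in [set p | Rm p != 0] &, injective gplus2}.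
Proof.
move=> [x1 x2] [y1 y2]; rewrite !inE => Rx Ry eq_xy.
have Gx : gplus2 (x1, x2) \in setX Gp Gp by rewrite inE /= !(gplus_in ufG).
have [_ [q [_ Rq _ rq]]] := support_gplus_rplus Gx.
have [mx1 mx2] := support_gminus Rx Rq rq.
have [my1 my2] := support_gminus Ry Rq (etrans rq eq_xy).
case: eq_xy => px py; congr (_, _).
- by apply: gplus_gminus_inj px _; rewrite mx1 my1.
- by apply: gplus_gminus_inj py _; rewrite mx2 my2.
Qed.

Lemma support_gplus2_image : gplus2 @: [set p | Rm p != 0] = setX Gp Gp.
Proof.
apply/setP => u; apply/imsetP/idP => [[p _ ->]|].
  by rewrite inE /= !(gplus_in ufG).
by case/support_gplus_rplus => p [q [Rp _ <- _]]; exists p; rewrite ?inE.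
Qed.

End PositiveInvertible.


Theorem proposition2 (R : realType) (gT : finGroupType) (Gp Gm : {group gT})
  (Rm : H2 gT R[i]) :
  unique_factorization Gp Gm ->
  positive2 Rm ->
  (exists Rinv : H2 gT R[i], invertible2 Gp Gm Rm Rinv /\ positive2 Rinv) ->
  exists (Rs : {set gT * gT}) (r : gT * gT -> R[i]),
    [/\ (forall p, p \in Rs -> 0 < r p),
        {in Rs &, injective (fun p : gT * gT => (gplus Gp Gm p.1, gplus Gp Gm p.2))},
        [set (gplus Gp Gm p.1, gplus Gp Gm p.2) | p in Rs] = setX Gp Gp
      & Rm = \sum_(p in Rs) r p *: basis2 R[i] p].
Proof.
move=> ufG Rm_ge0 [Ri [[RmRi RiRm] Ri_ge0]].
exists [set p | Rm p != 0], Rm; split.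
- by move=> p; rewrite inE lt0r => ->; apply: Rm_ge0.
- exact (support_gplus2_inj ufG Rm_ge0 Ri_ge0 RmRi RiRm).
- exact (support_gplus2_image ufG Rm_ge0 Ri_ge0 RmRi).
- exact: H2_support_expansion.
Qed.
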